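(* Let $N\ge2$ be an integer and let $\omega$ be a primitive $N$-th root of unity. For all nonzero complex numbers $b,z$, $$\sum_{k=0}^{N-1}(b;\omega)_k\,z^k=\Big(\frac{bz}{\omega}\Big)^{N-1}\sum_{k=0}^{N-1}(\omega/z;\omega)_k\Big(\frac{\omega}{b}\Big)^k .$$
   Context: $(x;q)_k=\prod_{m=1}^{k}(1-xq^{m-1})$ denotes the $q$-Pochhammer symbol, with $(x;q)_0=1$. *)

From HB Require Import structures.
From mathcomp Require Import all_boot all_order all_algebra all_field.
Set Implicit Arguments. Unset Strict Implicit. Unset Printing Implicit Defensive.
Import Order.TTheory GRing.Theory Num.Theory.
Local Open Scope ring_scope.

Definition qpoch (R : comNzRingType) (x q : R) (k : nat) : R :=
  \prod_(0 <= m < k) (1 - x * q ^+ m).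

From HB Require Import structures.
From mathcomp Require Import all_boot all_order all_algebra all_field.
From mathcomp Require Import ring.
Set Implicit Arguments. Unset Strict Implicit. Unset Printing Implicit Defensive.
Import Order.TTheory GRing.Theory Num.Theory.
Local Open Scope ring_scope.

(* Both sides, viewed as functions of [b], satisfy the same first-order
   q-difference equation [f b = 1 - (1 - b^N) z^N + (1 - b) z f (q b)]: for the
   left side it comes from shifting the base of the Pochhammer symbols, for the
   right side from shifting the argument [q/b] of the sum.  Their difference [d]
   therefore satisfies [d b = (1 - b) z d (q b)], and going once around the orbit
   of [b] under multiplication by [q] gives [d b (1 - (1 - b^N) z^N) = 0] for
   every [b != 0].  Both sides are polynomials in [b] (the right one thanks to
   the factor [b^(N-1)]), and the second factor is a nonzero polynomial, so [d]
   vanishes identically. *)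

Lemma qpoch0 (R : comNzRingType) (x q : R) : qpoch x q 0 = 1.
Proof. by rewrite /qpoch big_nil. Qed.

Lemma qpochS (R : comNzRingType) (x q : R) k :
  qpoch x q k.+1 = qpoch x q k * (1 - x * q ^+ k).
Proof. by rewrite /qpoch big_nat_recr. Qed.

Lemma qpochSl (R : comNzRingType) (x q : R) k :
  qpoch x q k.+1 = (1 - x) * qpoch (q * x) q k.
Proof.
rewrite /qpoch big_nat_recl // expr0 mulr1; congr (_ * _).
by apply: eq_bigr => m _; rewrite exprS mulrCA mulrA.
Qed.

(* [(x;q)_N] is the value at [1/x] of [prod_m (X - q^m) = X^N - 1], rescaled. *)
Lemma qpoch_prim_root (C : fieldType) N (q : C) x : N.-primitive_root q ->
  qpoch x q N = 1 - x ^+ N.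
Proof.
move=> q_prim; have N_gt0 := prim_order_gt0 q_prim.
have [->|x_neq0] := eqVneq x 0.
  rewrite expr0n eqn0Ngt N_gt0 subr0 /qpoch big1 // => m _.
  by rewrite mul0r subr0.
have := congr1 (horner^~ x^-1) (factor_Xn_sub_1 q_prim).
rewrite horner_prod (eq_bigr (fun m => x^-1 - q ^+ m)) => [prod_eq|m _];
  last by rewrite !hornerE.
transitivity (\prod_(0 <= m < N) (x * (x^-1 - q ^+ m))).
  by apply: eq_bigr => m _; rewrite mulrBr mulfV.
rewrite big_split /= prodr_const_nat subn0.
by rewrite prod_eq !hornerE mulrBr -exprMn mulfV // expr1n mulr1.
Qed.

Definition qpoch_sum (R : comNzRingType) N (q a w : R) :=
  \sum_(0 <= k < N) qpoch a q k * w ^+ k.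

Section QpochSum.
Variables (R : comNzRingType) (N : nat) (q a w : R).

Lemma qpoch_sum_recr :
  qpoch_sum N.+1 q a w = qpoch_sum N q a w + qpoch a q N * w ^+ N.
Proof. by rewrite /qpoch_sum big_nat_recr. Qed.

Lemma qpoch_sum_recl :
  qpoch_sum N.+1 q a w = 1 + \sum_(0 <= k < N) qpoch a q k.+1 * w ^+ k.+1.
Proof. by rewrite /qpoch_sum big_nat_recl // qpoch0 expr0 mulr1. Qed.

Lemma qpoch_sum_shift_arg :
  qpoch_sum N q a w * (1 - w) + a * w * qpoch_sum N q a (q * w) =
  1 - qpoch a q N * w ^+ N.
Proof.
have tail_eq : \sum_(0 <= k < N) qpoch a q k.+1 * w ^+ k.+1 =
    w * qpoch_sum N q a w - a * w * qpoch_sum N q a (q * w).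
  rewrite /qpoch_sum !mulr_sumr -sumrB; apply: eq_bigr => k _.
  by rewrite qpochS exprMn exprS; ring.
have rec_eq : qpoch_sum N q a w + qpoch a q N * w ^+ N =
    1 + (w * qpoch_sum N q a w - a * w * qpoch_sum N q a (q * w)).
  by rewrite -qpoch_sum_recr qpoch_sum_recl tail_eq.
apply: subr0_eq; rewrite -(subrr (qpoch_sum N q a w + qpoch a q N * w ^+ N)).
by rewrite {2}rec_eq; ring.
Qed.

Lemma qpoch_sum_shift_base :
  qpoch_sum N q a w + qpoch a q N * w ^+ N =
  1 + (1 - a) * w * qpoch_sum N q (q * a) w.
Proof.
rewrite -qpoch_sum_recr qpoch_sum_recl /qpoch_sum mulr_sumr.
by congr (1 + _); apply: eq_bigr => k _; rewrite qpochSl exprS; ring.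
Qed.

End QpochSum.

Lemma qpoch_sum_prim_rec (C : fieldType) N (q a w : C) : N.-primitive_root q ->
  qpoch_sum N q a w =
  1 - (1 - a ^+ N) * w ^+ N + (1 - a) * w * qpoch_sum N q (q * a) w.
Proof.
move=> q_prim; apply: (addIr (qpoch a q N * w ^+ N)).
by rewrite qpoch_sum_shift_base -(qpoch_prim_root a q_prim); ring.
Qed.

Definition qpoch_sum_reflected (C : fieldType) N (q z b : C) :=
  (b * z / q) ^+ N.-1 * qpoch_sum N q (q / z) (q / b).

Lemma qpoch_sum_reflected_rec (C : fieldType) N (q z b : C) :
  N.-primitive_root q -> z != 0 -> b != 0 ->
  qpoch_sum_reflected N q z b =
  1 - (1 - b ^+ N) * z ^+ N + (1 - b) * z * qpoch_sum_reflected N q z (q * b).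
Proof.
move=> q_prim z_neq0 b_neq0.
have q_neq0 : q != 0 by rewrite (prim_root_eq0 q_prim) -lt0n (prim_order_gt0 q_prim).
case: N q_prim => [|n] q_prim; first by have := prim_order_gt0 q_prim.
have qn : q ^+ n = q^-1.
  by apply: (mulfI q_neq0); rewrite mulfV // -exprS prim_expr_order.
have := qpoch_sum_shift_arg n.+1 q (q / z) b^-1.
rewrite /qpoch_sum_reflected /= (qpoch_prim_root _ q_prim).
have -> : q / (q * b) = b^-1 by rewrite invfM mulrA mulfV // mul1r.
have -> : q * b * z / q = b * z by field.
set X := qpoch_sum _ _ _ b^-1; set Y := qpoch_sum _ _ _ (q * b^-1) => shift_eq.
have -> : Y = (1 - (1 - (q / z) ^+ n.+1) * b^-1 ^+ n.+1 - X * (1 - b^-1)) * b / (q / z).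
  by rewrite -shift_eq; field; rewrite q_neq0 z_neq0 b_neq0.
rewrite !exprS !exprMn !exprVn qn; field.
by rewrite q_neq0 z_neq0 b_neq0 !expf_neq0 // oner_eq0.
Qed.

Section QDifferenceEquation.
Variables (C : fieldType) (N : nat) (q z : C) (f : C -> C).
Hypothesis q_prim : N.-primitive_root q.
Hypothesis f_rec : forall b : C, b != 0 -> f b = (1 - b) * z * f (q * b).

Lemma qdiff_iter (b : C) k : b != 0 -> f b = qpoch b q k * z ^+ k * f (q ^+ k * b).
Proof.
move=> b_neq0; elim: k => [|k IHk]; first by rewrite qpoch0 expr0 !mul1r.
have q_neq0 : q != 0 by rewrite (prim_root_eq0 q_prim) -lt0n (prim_order_gt0 q_prim).
rewrite IHk f_rec ?mulf_neq0 ?expf_neq0 // qpochS !exprS mulrA; ring.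
Qed.

Lemma qdiff_annihilated (b : C) : b != 0 -> f b * (1 - (1 - b ^+ N) * z ^+ N) = 0.
Proof.
move=> b_neq0; have orbit_eq := qdiff_iter N b_neq0.
rewrite (prim_expr_order q_prim) mul1r (qpoch_prim_root b q_prim) in orbit_eq.
by rewrite mulrBr mulr1 mulrC -orbit_eq subrr.
Qed.

End QDifferenceEquation.

Lemma poly_nonzero_roots_eq0 (C : numDomainType) (p : {poly C}) :
  (forall x, x != 0 -> root p x) -> p = 0.
Proof.
move=> p_roots; apply: (@roots_geq_poly_eq0 _ p [seq i.+1%:R | i <- iota 0 (size p)]).
- by apply/allP => _ /mapP [i _ ->]; apply: p_roots; rewrite pnatr_eq0.
- by rewrite map_inj_uniq ?iota_uniq // => i j /eqP; rewrite eqr_nat => /eqP [].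
- by rewrite size_map size_iota.
Qed.

Section Reflection.
Variables (C : numFieldType) (n : nat) (q z : C).
Hypotheses (q_prim : n.+1.-primitive_root q) (z_neq0 : z != 0).

Let lhs_poly : {poly C} :=
  \sum_(0 <= k < n.+1) z ^+ k *: \prod_(0 <= m < k) (1 - (q ^+ m)%:P * 'X).

Let rhs_poly : {poly C} :=
  \sum_(0 <= j < n.+1) (qpoch (q / z) q j * (z / q) ^+ n * q ^+ j) *: 'X^(n - j).

Let annihilator : {poly C} := 1 - (z ^+ n.+1)%:P * (1 - 'X^(n.+1)).

Lemma horner_lhs_poly (x : C) : lhs_poly.[x] = qpoch_sum n.+1 q x z.
Proof.
rewrite horner_sum; apply: eq_bigr => k _.
rewrite hornerZ horner_prod mulrC /qpoch; congr (_ * _).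
by apply: eq_bigr => m _; rewrite !hornerE mulrC.
Qed.

Lemma horner_rhs_poly (x : C) : x != 0 -> rhs_poly.[x] = qpoch_sum_reflected n.+1 q z x.
Proof.
move=> x_neq0; have q_neq0 : q != 0 by rewrite (prim_root_eq0 q_prim).
rewrite horner_sum /qpoch_sum_reflected /qpoch_sum mulr_sumr.
apply: eq_big_nat => j /andP [_ j_le_n].
have split_pow : x ^+ n = x ^+ (n - j) * x ^+ j by rewrite -exprD subnK.
rewrite hornerZ hornerXn !exprMn !exprVn split_pow.
by field; rewrite !expf_neq0.
Qed.

Lemma annihilator_neq0 : annihilator != 0.
Proof.
apply/eqP => /(congr1 (fun p : {poly C} => p`_n.+1)).
rewrite coefB coef1 coefCM coefB coef1 coefXn eqxx coef0 !sub0r mulrN mulr1 opprK.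
by move/eqP; rewrite expf_eq0 (negbTE z_neq0) andbF.
Qed.

Lemma qpoch_sum_reflection (b : C) : b != 0 ->
  qpoch_sum n.+1 q b z = qpoch_sum_reflected n.+1 q z b.
Proof.
pose d x := qpoch_sum n.+1 q x z - qpoch_sum_reflected n.+1 q z x.
have d_rec (x : C) : x != 0 -> d x = (1 - x) * z * d (q * x).
  move=> x_neq0; rewrite /d (qpoch_sum_prim_rec _ _ q_prim).
  by rewrite (qpoch_sum_reflected_rec q_prim z_neq0 x_neq0); ring.
have d_annihilated : (lhs_poly - rhs_poly) * annihilator = 0.
  apply: poly_nonzero_roots_eq0 => x x_neq0; apply/rootP.
  rewrite hornerM hornerD hornerN horner_lhs_poly horner_rhs_poly // !hornerE.
  by rewrite -[RHS](qdiff_annihilated q_prim d_rec x_neq0) /d; ring.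
move=> b_neq0; apply/eqP; rewrite -subr_eq0.
move/eqP: d_annihilated; rewrite mulf_eq0 (negbTE annihilator_neq0) orbF.
by move=> /eqP/(congr1 (horner^~ b)); rewrite hornerD hornerN horner_lhs_poly
  horner_rhs_poly // hornerC => ->.
Qed.

End Reflection.

Theorem mainTheorem3 (C : numClosedFieldType) (N : nat) (omega b z : C) :
  (2 <= N)%N -> N.-primitive_root omega -> b != 0 -> z != 0 ->
  \sum_(0 <= k < N) qpoch b omega k * z ^+ k =
  (b * z / omega) ^+ N.-1 *
    \sum_(0 <= k < N) qpoch (omega / z) omega k * (omega / b) ^+ k.
Proof.
case: N => // n _ omega_prim b_neq0 z_neq0.
exact: (qpoch_sum_reflection omega_prim z_neq0 b_neq0).
Qed.
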